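(* Fix a horizon $T\in\mathbb{N}$, matrices $A_0,\dots,A_{T}\in\mathbb{R}^{n\times n}$, a symmetric positive definite noise covariance $\mathcal{W}\in\mathbb{R}^{n\times n}$, a symmetric positive definite initial covariance $\Sigma_0$, and for each $t=0,\dots,T$ sets $\mathsf{C}_t$ of real matrices with $n$ columns and $\mathsf{V}_t$ of symmetric positive definite matrices of compatible size. Let $\mathsf{R}_t=\{C_t^{\mathsf T}\mathcal{V}_t^{-1}C_t : C_t\in\mathsf{C}_t,\ \mathcal{V}_t\in\mathsf{V}_t\}$ and $h_t(M)=A_{t-1}MA_{t-1}^{\mathsf T}+\mathcal{W}$. Problem (D) (sensor design): minimize $\sum_{t=0}^T\mathrm{tr}(P_t)$ over $\{P_t,Q_t,Q_{t|t-1},R_t,C_t,\mathcal{V}_t\}_{t=0}^T$ subject to, for all $t$: $P_t=Q_t^{-1}$, $Q_t=Q_{t|t-1}+R_t$, $Q_{t|t-1}=(h_t(P_{t-1}))^{-1}$ for $t\ge1$, $Q_{0|-1}=\Sigma_0^{-1}$, $R_t=C_t^{\mathsf T}\mathcal{V}_t^{-1}C_t$, $C_t\in\mathsf{C}_t$, $\mathcal{V}_t\in\mathsf{V}_t$. Problem (R) (relaxation): minimize $\sum_{t=0}^T\mathrm{tr}(P_t)$ over $\{P_t,Q_t,Q_{t|t-1},R_t\}_{t=0}^T$ subject to, for all $t$: $Q_t=Q_{t|t-1}+R_t$, $\begin{bmatrix}P_t & I\\ I & Q_t\end{bmatrix}\succeq0$, for $t\ge1$: $\begin{bmatrix}\mathcal{W}^{-1}-Q_{t|t-1}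 & \mathcal{W}^{-1}A_{t-1}\\ A_{t-1}^{\mathsf T}\mathcal{W}^{-1} & Q_{t-1}+A_{t-1}^{\mathsf T}\mathcal{W}^{-1}A_{t-1}\end{bmatrix}\succeq0$, $R_t\in\mathsf{R}_t$, and $Q_{0|-1}=\Sigma_0^{-1}$. Then an optimal solution of Problem (R) is also an optimal solution of Problem (D), and vice versa.
   Context: Problem (D) is the sensor design problem for the linear system $X_{t+1}=A_tX_t+W_t$, $W_t\sim\mathcal N(0,\mathcal W)$ i.i.d., $X_0\sim\mathcal N(\mu_0,\Sigma_0)$, with a designed sensor $Y_t=C_tX_t+V_t$, $V_t\sim\mathcal N(0,\mathcal V_t)$; $P_t$ is the Kalman filter error covariance and $Q_t=P_t^{-1}$, $Q_{t|t-1}$ are information matrices. Problem (R) replaces $P_t=Q_t^{-1}$ by $P_t\succeq Q_t^{-1}$ and $Q_{t|t-1}=(h_t(P_{t-1}))^{-1}$ by $Q_{t|t-1}\preceq(h_t(Q_{t-1}^{-1}))^{-1}$, written as linear matrix inequalities via Schur complements. *)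

From HB Require Import structures.
From mathcomp Require Import all_boot all_order all_algebra.
From mathcomp Require Import reals.
Set Implicit Arguments. Unset Strict Implicit. Unset Printing Implicit Defensive.
Import Order.TTheory GRing.Theory Num.Theory.
Local Open Scope ring_scope.

Section SensorDesign.
Variable R : realType.

Definition psd k (M : 'M[R]_k) : Prop :=
  M^T = M /\ forall x : 'cV[R]_k, 0 <= (x^T *m M *m x) ord0 ord0.

Definition pd k (M : 'M[R]_k) : Prop :=
  M^T = M /\ forall x : 'cV[R]_k, x != 0 -> 0 < (x^T *m M *m x) ord0 ord0.

Variables (n T : nat) (A : nat -> 'M[R]_n) (W Sigma0 : 'M[R]_n)
  (m : nat -> nat)
  (Cset : forall t, 'M[R]_(m t, n) -> Prop)
  (Vset : forall t, 'M[R]_(m t) -> Prop).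

Definition hmap (t : nat) (M : 'M[R]_n) : 'M[R]_n :=
  A t.-1 *m M *m (A t.-1)^T + W.

Definition cost (P : nat -> 'M[R]_n) : R := \sum_(t < T.+1) \tr (P t).

Definition feasD (P Q Qp Rm : nat -> 'M[R]_n)
  (C : forall t, 'M[R]_(m t, n)) (V : forall t, 'M[R]_(m t)) : Prop :=
  forall t, (t <= T)%N ->
    [/\ (Q t \in unitmx /\ P t = invmx (Q t)),
        Q t = (Qp t + Rm t)%R,
        (if t is 0 then Qp 0 = invmx Sigma0
         else (hmap t (P t.-1) \in unitmx /\ Qp t = invmx (hmap t (P t.-1)))),
        Rm t = (C t)^T *m invmx (V t) *m C t
      & (Cset (C t) /\ Vset (V t))].

Definition optD P Q Qp Rm C V : Prop :=
  feasD P Q Qp Rm C V /\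
  forall P' Q' Qp' Rm' C' V', feasD P' Q' Qp' Rm' C' V' -> cost P <= cost P'.

Definition inRset (t : nat) (Rt : 'M[R]_n) : Prop :=
  exists (Ct : 'M[R]_(m t, n)) (Vt : 'M[R]_(m t)),
    [/\ Cset Ct, Vset Vt & Rt = Ct^T *m invmx Vt *m Ct].

Definition feasR (P Q Qp Rm : nat -> 'M[R]_n) : Prop :=
  forall t, (t <= T)%N ->
    [/\ Q t = (Qp t + Rm t)%R,
        psd (block_mx (P t) 1%:M 1%:M (Q t)),
        (if t is 0 then Qp 0 = invmx Sigma0
         else psd (block_mx (invmx W - Qp t) (invmx W *m A t.-1)
                            ((A t.-1)^T *m invmx W)
                            (Q t.-1 + (A t.-1)^T *m invmx W *m A t.-1)))
      & inRset t (Rm t)].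

Definition optR P Q Qp Rm : Prop :=
  feasR P Q Qp Rm /\
  forall P' Q' Qp' Rm', feasR P' Q' Qp' Rm' -> cost P <= cost P'.

End SensorDesign.

From HB Require Import structures.
From mathcomp Require Import all_boot all_order all_algebra.
From mathcomp Require Import reals.
From mathcomp Require Import lra.
From Stdlib Require Import Logic.IndefiniteDescription.
Set Implicit Arguments. Unset Strict Implicit. Unset Printing Implicit Defensive.
Import Order.TTheory GRing.Theory Num.Theory.
Local Open Scope ring_scope.

(* Both LMIs of (R) are Schur complements: the first says that Q_t is
   positive definite with P_t >= Q_t^-1, the second that
   Q_{t|t-1} <= h_t(Q_{t-1}^-1)^-1, and both hold with equality under the
   constraints of (D).  Since inversion is antitone and h_t is monotone in
   the Loewner order, every (R)-feasible point is dominated by the Kalman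
   information recursion driven by the same R_t, which is (D)-feasible:
   Q_t <= Q_t^K, hence P_t >= (Q_t^K)^-1.  So the two problems have the same
   optimal value, and at an optimum of (R) the positive semidefinite gaps
   have zero trace, so they vanish and the relaxed constraints are tight. *)

Section QuadraticForms.
Variable R : realType.
Implicit Types k l : nat.

Definition dot k (u v : 'cV[R]_k) : R := (u^T *m v) ord0 ord0.

Lemma dotC k (u v : 'cV[R]_k) : dot u v = dot v u.
Proof. by rewrite /dot -{1}(trmxK v) -trmx_mul mxE. Qed.

Lemma dotDl k (u v w : 'cV[R]_k) : dot (u + v) w = dot u w + dot v w.
Proof. by rewrite /dot linearD /= mulmxDl mxE. Qed.

Lemma dotDr k (u v w : 'cV[R]_k) : dot w (u + v) = dot w u + dot w v.
Proof. by rewrite /dot mulmxDr mxE. Qed.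

Lemma dotNl k (u w : 'cV[R]_k) : dot (- u) w = - dot u w.
Proof. by rewrite /dot linearN /= mulNmx mxE. Qed.

Lemma dotNr k (u w : 'cV[R]_k) : dot w (- u) = - dot w u.
Proof. by rewrite /dot mulmxN mxE. Qed.

Lemma dotBl k (u v w : 'cV[R]_k) : dot (u - v) w = dot u w - dot v w.
Proof. by rewrite dotDl dotNl. Qed.

Lemma dotBr k (u v w : 'cV[R]_k) : dot w (u - v) = dot w u - dot w v.
Proof. by rewrite dotDr dotNr. Qed.

Lemma dot0l k (w : 'cV[R]_k) : dot 0 w = 0.
Proof. by rewrite /dot linear0 mul0mx mxE. Qed.

Lemma dot0r k (w : 'cV[R]_k) : dot w 0 = 0.
Proof. by rewrite dotC dot0l. Qed.

Lemma dotZl k (s : R) (u v : 'cV[R]_k) : dot (s *: u) v = s * dot u v.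
Proof. by rewrite /dot linearZ /= -scalemxAl mxE. Qed.

Lemma dotZr k (s : R) (u v : 'cV[R]_k) : dot v (s *: u) = s * dot v u.
Proof. by rewrite /dot -scalemxAr mxE. Qed.

Lemma dot_mulmxr k l (M : 'M[R]_(k, l)) u v : dot u (M *m v) = dot (M^T *m u) v.
Proof. by rewrite /dot trmx_mul trmxK mulmxA. Qed.

Lemma dot_mulmxl k l (M : 'M[R]_(k, l)) u v : dot (M *m v) u = dot v (M^T *m u).
Proof. by rewrite dotC dot_mulmxr dotC. Qed.

Lemma dot_gt0 k (x : 'cV[R]_k) : x != 0 -> 0 < dot x x.
Proof.
move=> x_neq0; rewrite /dot mxE.
have sq_ge0 (i : 'I_k) : true -> 0 <= x^T ord0 i * x i ord0.
  by rewrite mxE -expr2 sqr_ge0.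
rewrite lt0r sumr_ge0 // andbT; apply: contra x_neq0.
rewrite psumr_eq0 // => /allP x0; apply/eqP/matrixP => i j; rewrite (ord1 j) mxE.
by have := x0 i (mem_index_enum _); rewrite mxE /= -expr2 sqrf_eq0 => /eqP.
Qed.

Lemma dot_delta_mx k (M : 'M[R]_k) (i j : 'I_k) :
  dot (delta_mx i 0) (M *m delta_mx j 0) = M i j.
Proof. by rewrite /dot -colE trmx_delta -rowE !mxE. Qed.

Lemma dot_block_mx k (a b c d : 'M[R]_k) (x y : 'cV[R]_k) :
  dot (col_mx x y) (block_mx a b c d *m col_mx x y) =
  dot x (a *m x) + dot x (b *m y) + dot y (c *m x) + dot y (d *m y).
Proof.
rewrite /dot tr_col_mx mulmxA mul_row_block mul_row_col !mulmxDl -!mulmxA !mxE.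
lra.
Qed.

Lemma psdE k (M : 'M[R]_k) :
  psd M <-> M^T = M /\ forall x, 0 <= dot x (M *m x).
Proof. by rewrite /dot; split=> -[sym qf]; split=> // x; have := qf x; rewrite mulmxA. Qed.

Lemma pdE k (M : 'M[R]_k) :
  pd M <-> M^T = M /\ forall x, x != 0 -> 0 < dot x (M *m x).
Proof. by rewrite /dot; split=> -[sym qf]; split=> // x /qf; rewrite mulmxA. Qed.

End QuadraticForms.

Section LoewnerOrder.
Variable R : realType.
Implicit Types k l : nat.

Lemma psd0 k : psd (0 : 'M[R]_k).
Proof. by apply/psdE; split=> [|x]; rewrite ?linear0 // mul0mx dot0r. Qed.

Lemma pd_psd k (M : 'M[R]_k) : pd M -> psd M.
Proof.
move=> /pdE [sym qf]; apply/psdE; split=> // x.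
by have [->|/qf/ltW //] := eqVneq x 0; rewrite dot0l.
Qed.

Lemma psdD k (M N : 'M[R]_k) : psd M -> psd N -> psd (M + N).
Proof.
move=> /psdE [symM qfM] /psdE [symN qfN]; apply/psdE.
by split=> [|x]; rewrite ?linearD /= ?symM ?symN // mulmxDl dotDr addr_ge0.
Qed.

Lemma pdD k (M N : 'M[R]_k) : psd M -> pd N -> pd (M + N).
Proof.
move=> /psdE [symM qfM] /pdE [symN qfN]; apply/pdE.
split=> [|x x_neq0]; first by rewrite linearD /= symM symN.
by rewrite mulmxDl dotDr ltr_wpDl // qfN.
Qed.

Lemma psd_trans k (M N K : 'M[R]_k) : psd (M - N) -> psd (N - K) -> psd (M - K).
Proof. by move=> MN NK; have := psdD MN NK; rewrite addrA subrK. Qed.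

Lemma psd_congr k l (M : 'M[R]_k) (C : 'M[R]_(k, l)) : psd M -> psd (C^T *m M *m C).
Proof.
move=> /psdE [sym qf]; apply/psdE; split; first by rewrite !trmx_mul trmxK sym mulmxA.
by move=> x; rewrite -!mulmxA dot_mulmxr trmxK.
Qed.

Lemma pd_congrD k l (M : 'M[R]_l) (C : 'M[R]_(k, l)) (N : 'M[R]_k) :
  psd M -> pd N -> pd (C *m M *m C^T + N).
Proof. by move=> /(psd_congr C^T); rewrite trmxK; apply: pdD. Qed.

Lemma pd_unit k (M : 'M[R]_k) : pd M -> M \in unitmx.
Proof.
move=> /pdE [sym qf]; apply: contraT => M_nunit.
have : kermx M != 0 by rewrite kermx_eq0 row_free_unit.
case/rowV0Pn => v /sub_kermxP vM0 v_neq0.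
have vT_neq0 : v^T != 0 by apply: contra v_neq0 => /eqP vT0; rewrite -(trmxK v) vT0 linear0.
have := qf _ vT_neq0.
by rewrite -sym -trmx_mul vM0 linear0 dot0r ltxx.
Qed.

Lemma pd_inv k (M : 'M[R]_k) : pd M -> pd (invmx M).
Proof.
move=> pdM; have Mu := pd_unit pdM; move: pdM => /pdE [sym qf].
apply/pdE; split=> [|x x_neq0]; first by rewrite trmx_inv sym.
have x_eq : x = M *m (invmx M *m x) by rewrite mulmxA mulmxV ?mul1mx.
rewrite {1}x_eq dotC; apply: qf; apply: contra x_neq0 => /eqP y0.
by rewrite x_eq y0 mulmx0.
Qed.

Lemma psd_tr_ge0 k (M : 'M[R]_k) : psd M -> 0 <= \tr M.
Proof. by move=> /psdE [_ qf]; rewrite sumr_ge0 // => i _; rewrite -dot_delta_mx. Qed.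

Lemma psd_eq0_diag k (M : 'M[R]_k) : psd M -> (forall i, M i i = 0) -> M = 0.
Proof.
move=> /psdE [sym qf] diag0; apply/matrixP => i j; rewrite mxE.
have Mji : M j i = M i j by rewrite -{1}sym mxE.
have := qf (delta_mx i 0 + delta_mx j 0); have := qf (delta_mx i 0 - delta_mx j 0).
rewrite !mulmxDr !mulmxN !dotDl !dotNl !dotDr !dotNr !dot_delta_mx !diag0 Mji.
lra.
Qed.

Lemma psd_tr_eq0 k (M : 'M[R]_k) : psd M -> \tr M = 0 -> M = 0.
Proof.
move=> psdM /eqP; rewrite psumr_eq0 => [/allP diag0|i _].
  by apply: psd_eq0_diag => // i; apply/eqP/diag0/mem_index_enum.
by move: psdM => /psdE [_ qf]; rewrite -dot_delta_mx.
Qed.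

Lemma psd_anti k (M N : 'M[R]_k) : psd (M - N) -> psd (N - M) -> M = N.
Proof.
move=> MN NM; apply/eqP; rewrite -subr_eq0; apply/eqP/psd_eq0_diag => // i.
move: MN NM => /psdE [_ /(_ (delta_mx i 0))] + /psdE [_ /(_ (delta_mx i 0))].
rewrite -opprB mulNmx dotNr !dot_delta_mx !mxE; lra.
Qed.

(* [x' M^-1 x = max_y (2 y'x - y' M y)], the maximum being attained at
   [y = M^-1 x]. *)
Lemma qf_invmx_ge k (M : 'M[R]_k) x y :
  pd M -> 2 * dot y x - dot y (M *m y) <= dot x (invmx M *m x).
Proof.
move=> pdM; have Mu := pd_unit pdM; move: pdM => /pd_psd /psdE [sym qf].
have := qf (y - invmx M *m x).
rewrite mulmxBr mulmxA mulmxV // mul1mx !dotBl !dotBr.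
rewrite [dot (invmx M *m x) (M *m y)]dot_mulmxl trmx_inv sym mulmxA mulVmx // mul1mx.
rewrite [dot (invmx M *m x) x]dotC [dot y x]dotC [dot x y]dotC; lra.
Qed.

Lemma qf_invmx_max k (M : 'M[R]_k) x : pd M ->
  dot x (invmx M *m x) =
  2 * dot (invmx M *m x) x - dot (invmx M *m x) (M *m (invmx M *m x)).
Proof.
move=> /pd_unit Mu; rewrite mulmxA mulmxV // mul1mx [dot (invmx M *m x) x]dotC.
lra.
Qed.

Lemma invmx_antitone k (M N : 'M[R]_k) :
  pd N -> psd (M - N) -> psd (invmx N - invmx M).
Proof.
move=> pdN NM; have pdM : pd M by have := pdD NM pdN; rewrite subrK.
have /pdE [symM _] := pd_inv pdM; have /pdE [symN _] := pd_inv pdN.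
apply/psdE; split=> [|x]; first by rewrite linearB /= symM symN.
rewrite mulmxBl dotBr subr_ge0 (qf_invmx_max x pdM).
have := qf_invmx_ge x (invmx M *m x) pdN.
move: NM => /psdE [_ /(_ (invmx M *m x))]; rewrite mulmxBl dotBr; lra.
Qed.

End LoewnerOrder.

Section SchurComplements.
Variable R : realType.
Variable k : nat.
Implicit Types P Q Qp Qprev W A : 'M[R]_k.

Lemma psd_block_id P Q :
  psd (block_mx P 1%:M 1%:M Q) -> pd Q /\ psd (P - invmx Q).
Proof.
move=> /psdE [+ qf]; rewrite tr_block_mx trmx1 => /eq_block_mx [symP _ _ symQ].
have qf2 x y : 0 <= dot x (P *m x) + dot x y + dot y x + dot y (Q *m y).
  by have := qf (col_mx x y); rewrite dot_block_mx !mul1mx.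
have pdQ : pd Q.
  apply/pdE; split=> // y y_neq0.
  have := dot_gt0 y_neq0; have := qf2 y 0; have := qf2 0 y.
  rewrite !mulmx0 !dot0l !dot0r.
  set a := dot y (P *m y); set b := dot y y; set c := dot y (Q *m y) => c_ge0 a_ge0 b_gt0.
  rewrite lt_neqAle; apply/andP; split; last by lra.
  apply/eqP => c0.
  (* At [(-s y, y)] the form is [s^2 a - 2 s |y|^2 + c], negative for
     [s = |y|^2 / (a + 1)] when [c = 0]. *)
  pose s := b / (a + 1).
  have s_gt0 : 0 < s by rewrite divr_gt0 //; lra.
  have sa : s * (a + 1) = b by rewrite divfK //; apply: lt0r_neq0; lra.
  have := qf2 (- (s *: y)) y.
  rewrite !mulmxN !dotNl !dotNr opprK -scalemxAr !dotZl !dotZr -/a -/b -/c.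
  nra.
split=> //; apply/psdE; split=> [|x]; first by rewrite linearB /= symP trmx_inv symQ.
have := qf2 x (- (invmx Q *m x)).
rewrite mulmxBl dotBr dotNr dotNl mulmxN dotNr dotNl opprK.
rewrite mulmxA mulmxV ?pd_unit // mul1mx [dot (invmx Q *m x) x]dotC; lra.
Qed.

Lemma psd_block_id_invmx Q : pd Q -> psd (block_mx (invmx Q) 1%:M 1%:M Q).
Proof.
move=> pdQ; have /pdE [symQ _] := pdQ.
apply/psdE; split=> [|v]; first by rewrite tr_block_mx trmx1 trmx_inv symQ.
rewrite -(vsubmxK v) dot_block_mx !mul1mx.
have := qf_invmx_ge (usubmx v) (- dsubmx v) pdQ.
rewrite dotNl mulmxN dotNr dotNl opprK [dot (dsubmx v) _]dotC; lra.
Qed.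

Definition prediction_lmi W A Qprev Qp : 'M[R]_(k + k) :=
  block_mx (invmx W - Qp) (invmx W *m A) (A^T *m invmx W)
           (Qprev + A^T *m invmx W *m A).

Lemma dot_prediction_lmi W A Qprev Qp x z : (invmx W)^T = invmx W ->
  dot (col_mx x z) (prediction_lmi W A Qprev Qp *m col_mx x z) =
  dot (x + A *m z) (invmx W *m (x + A *m z)) - dot x (Qp *m x) + dot z (Qprev *m z).
Proof.
move=> symWi; rewrite dot_block_mx mulmxBl dotBr mulmxDl dotDr mulmxDr !dotDl !dotDr.
rewrite -!mulmxA [dot z _]dot_mulmxr [dot z (A^T *m _)]dot_mulmxr trmxK; lra.
Qed.

Lemma psd_prediction_lmi W A Qprev Qp : pd W -> pd Qprev ->
  psd (prediction_lmi W A Qprev Qp) ->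
  psd (invmx (A *m invmx Qprev *m A^T + W) - Qp).
Proof.
move=> pdW pdQ /psdE [+ qf].
have /pdE [symWi _] := pd_inv pdW.
rewrite tr_block_mx linearB /= symWi => /eq_block_mx [/addrI/oppr_inj symQp _ _ _].
set H := A *m invmx Qprev *m A^T + W.
have pdH : pd H by apply: pd_congrD => //; apply/pd_psd/pd_inv.
have /pdE [symHi _] := pd_inv pdH.
apply/psdE; split=> [|x]; first by rewrite linearB /= symHi symQp.
rewrite mulmxBl dotBr subr_ge0.
set v := invmx H *m x.
have x_eq : x = H *m v by rewrite mulmxA mulmxV ?pd_unit // mul1mx.
(* [z] minimises the form in its second block for the given [x]. *)
set z := - (invmx Qprev *m (A^T *m v)).
have Wv : x + A *m z = W *m v.
  by rewrite /z mulmxN {1}x_eq mulmxDl -!mulmxA addrAC subrr add0r.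
have := qf (col_mx x z); rewrite dot_prediction_lmi // Wv.
rewrite [invmx W *m _]mulmxA mulVmx ?pd_unit // mul1mx.
rewrite /z mulmxN dotNl dotNr opprK [Qprev *m _]mulmxA mulmxV ?pd_unit // mul1mx.
have -> : dot x v = dot (W *m v) v + dot (invmx Qprev *m (A^T *m v)) (A^T *m v).
  by rewrite {1}x_eq /H mulmxDl dotDl addrC -!mulmxA [dot (A *m _) _]dot_mulmxl.
lra.
Qed.

Lemma psd_prediction_lmi_invmx W A Qprev : pd W -> pd Qprev ->
  psd (prediction_lmi W A Qprev (invmx (A *m invmx Qprev *m A^T + W))).
Proof.
move=> pdW pdQ.
have /pdE [symWi _] := pd_inv pdW; have /pdE [symQ _] := pdQ.
set H := A *m invmx Qprev *m A^T + W.
have pdH : pd H by apply: pd_congrD => //; apply: pd_psd; apply: pd_inv.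
have /pdE [symHi _] := pd_inv pdH.
apply/psdE; split=> [|u].
  rewrite tr_block_mx linearB /= symWi symHi linearD /= symQ !trmx_mul trmxK symWi.
  by rewrite mulmxA.
rewrite -(vsubmxK u) dot_prediction_lmi //.
set x := usubmx u; set z := dsubmx u; set v := invmx H *m x.
rewrite (qf_invmx_max x pdH) -/v.
have := qf_invmx_ge (x + A *m z) v pdW.
have := qf_invmx_ge (- z) (A^T *m v) (pd_inv pdQ); rewrite invmxK.
have -> : dot v (H *m v) = dot (A^T *m v) (invmx Qprev *m (A^T *m v)) + dot v (W *m v).
  by rewrite /H mulmxDl dotDr -!mulmxA dot_mulmxr.
rewrite dotDr [dot v (A *m z)]dot_mulmxr mulmxN !dotNr !dotNl opprK; lra.
Qed.

End SchurComplements.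

Section TraceCost.
Variables (R : realType) (n T : nat).
Implicit Types P : nat -> 'M[R]_n.

Lemma cost_le_psd P P' :
  (forall t, (t <= T)%N -> psd (P t - P' t)) -> cost T P' <= cost T P.
Proof.
move=> PP'; apply: ler_sum => t _.
by rewrite -subr_ge0 -linearB; exact: psd_tr_ge0 (PP' t (ltn_ord t)).
Qed.

Lemma cost_eq_psd P P' :
  (forall t, (t <= T)%N -> psd (P t - P' t)) -> cost T P' = cost T P ->
  forall t, (t <= T)%N -> P t = P' t.
Proof.
move=> PP' costE t tT; apply/eqP; rewrite -subr_eq0; apply/eqP/psd_tr_eq0; first exact: PP'.
have gap_ge0 (i : 'I_T.+1) : true -> 0 <= \tr (P i - P' i).
  by move=> _; exact: psd_tr_ge0 (PP' i (ltn_ord i)).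
have /eqP : \sum_(i < T.+1) \tr (P i - P' i) = 0.
  by rewrite (eq_bigr _ (fun i _ => linearB _ _ _)) sumrB -/(cost T P) -/(cost T P') costE subrr.
by rewrite psumr_eq0 // => /allP /(_ (Ordinal (tT : (t < T.+1)%N)) (mem_index_enum _)) /eqP.
Qed.

End TraceCost.

Section KalmanRecursion.
Variables (R : realType) (n T : nat) (A : nat -> 'M[R]_n) (W Sigma0 : 'M[R]_n)
  (m : nat -> nat) (Cset : forall t, 'M[R]_(m t, n) -> Prop)
  (Vset : forall t, 'M[R]_(m t) -> Prop).
Hypotheses (pdW : pd W) (pdS0 : pd Sigma0)
  (pdV : forall t (Vt : 'M[R]_(m t)), Vset Vt -> pd Vt).

Local Notation hmap := (hmap A W).
Local Notation feasD := (feasD T A W Sigma0 Cset Vset).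
Local Notation feasR := (feasR T A W Sigma0 Cset Vset).
Local Notation optR := (optR T A W Sigma0 Cset Vset).
Implicit Types (P Q Qp Rm : nat -> 'M[R]_n).

Fixpoint kalman_Q Rm t : 'M[R]_n :=
  if t is s.+1 then invmx (hmap t (invmx (kalman_Q Rm s))) + Rm t
  else invmx Sigma0 + Rm 0%N.

Definition kalman_Qpred Rm t : 'M[R]_n :=
  if t is s.+1 then invmx (hmap t (invmx (kalman_Q Rm s))) else invmx Sigma0.

Definition kalman_P Rm t : 'M[R]_n := invmx (kalman_Q Rm t).

Lemma kalman_QE Rm t : kalman_Q Rm t = kalman_Qpred Rm t + Rm t.
Proof. by case: t. Qed.

Lemma hmap_pd t X : psd X -> pd (hmap t X).
Proof. by move=> psdX; apply: pd_congrD. Qed.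

Lemma hmap_mono t X Y : psd (X - Y) -> psd (hmap t X - hmap t Y).
Proof.
move=> XY; rewrite /hmap opprD addrACA subrr addr0 -mulmxBl -mulmxBr.
by have := psd_congr (A t.-1)^T XY; rewrite trmxK.
Qed.

Lemma inRset_psd t Rt : inRset Cset Vset t Rt -> psd Rt.
Proof. by case=> C [V [_ /pdV/pd_inv/pd_psd pdVi ->]]; apply: psd_congr. Qed.

Lemma kalman_Q_pd Rm : (forall t, (t <= T)%N -> psd (Rm t)) ->
  forall t, (t <= T)%N -> pd (kalman_Q Rm t).
Proof.
move=> psdR; elim=> [|t IH] tT /=; rewrite addrC; apply: pdD; try exact: psdR.
  exact: pd_inv.
by apply/pd_inv/hmap_pd/pd_psd/pd_inv/IH/ltnW.
Qed.

Lemma feasD_kalman_of_feasR P Q Qp Rm : feasR P Q Qp Rm ->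
  exists C V, feasD (kalman_P Rm) (kalman_Q Rm) (kalman_Qpred Rm) Rm C V.
Proof.
move=> hF; have RmR t (tT : (t <= T)%N) : inRset Cset Vset t (Rm t) by have [] := hF t tT.
have CV_ex t : exists CV : 'M[R]_(m t, n) * 'M[R]_(m t), (t <= T)%N ->
    [/\ Cset CV.1, Vset CV.2 & Rm t = CV.1^T *m invmx CV.2 *m CV.1].
  have [tT|] := leqP t T; last by exists (0, 0).
  by have [C [V RmE]] := RmR t tT; exists (C, V).
pose CV t := proj1_sig (constructive_indefinite_description _ (CV_ex t)).
have CV_spec t : (t <= T)%N ->
    [/\ Cset (CV t).1, Vset (CV t).2 & Rm t = (CV t).1^T *m invmx (CV t).2 *m (CV t).1].
  exact: proj2_sig (constructive_indefinite_description _ (CV_ex t)).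
have pdQ := kalman_Q_pd (fun t tT => inRset_psd (RmR t tT)).
exists (fun t => (CV t).1), (fun t => (CV t).2) => t tT.
have [C_in V_in RmE] := CV_spec t tT.
split=> //; [by split=> //; apply/pd_unit/pdQ | exact: kalman_QE |].
case: t tT {C_in V_in RmE} => //= t tT; split=> //.
exact/pd_unit/hmap_pd/pd_psd/pd_inv/pdQ/ltnW.
Qed.

Lemma feasD_Q_pd P Q Qp Rm C V : feasD P Q Qp Rm C V ->
  forall t, (t <= T)%N -> pd (Q t).
Proof.
move=> hD; elim=> [|t IH] tT.
  have [_ -> -> -> [_ /pdV/pd_inv/pd_psd pdVi]] := hD 0%N tT.
  by rewrite addrC; apply: pdD; [apply: psd_congr | apply: pd_inv].
have [_ -> [_ ->] -> [_ /pdV/pd_inv/pd_psd pdVi]] := hD t.+1 tT.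
have [[_ ->] _ _ _ _] := hD t (ltnW tT).
by rewrite addrC; apply: pdD; [apply: psd_congr | apply/pd_inv/hmap_pd/pd_psd/pd_inv/IH/ltnW].
Qed.

Lemma feasR_of_feasD P Q Qp Rm C V : feasD P Q Qp Rm C V -> feasR P Q Qp Rm.
Proof.
move=> hD t tT; have [[_ ->] QE Qp_spec RmE [C_in V_in]] := hD t tT.
split=> //; first exact/psd_block_id_invmx/(feasD_Q_pd hD).
  case: t tT {QE RmE C_in V_in} Qp_spec => //= t tT [_ ->].
  have [[_ ->] _ _ _ _] := hD t (ltnW tT).
  exact/psd_prediction_lmi_invmx/(feasD_Q_pd hD)/ltnW.
by exists (C t), (V t).
Qed.

Lemma feasR_Q_le_kalman P Q Qp Rm : feasR P Q Qp Rm ->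
  forall t, (t <= T)%N -> psd (kalman_Q Rm t - Q t).
Proof.
move=> hF; have psdR t (tT : (t <= T)%N) : psd (Rm t) by have [_ _ _ /inRset_psd] := hF t tT.
elim=> [|t IH] tT; have [-> _ Qp_spec _] := hF _ tT.
  by rewrite /= Qp_spec subrr; apply: psd0.
have [_ /psd_block_id [pdQ _] _ _] := hF t (ltnW tT).
rewrite kalman_QE opprD addrACA subrr addr0.
apply: psd_trans (psd_prediction_lmi pdW pdQ Qp_spec).
apply/invmx_antitone/hmap_mono/invmx_antitone/IH/ltnW => //.
exact/hmap_pd/pd_psd/pd_inv/(kalman_Q_pd psdR)/ltnW.
Qed.

Lemma feasR_P_ge_kalman P Q Qp Rm : feasR P Q Qp Rm ->
  forall t, (t <= T)%N -> psd (P t - kalman_P Rm t).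
Proof.
move=> hF t tT; have [_ /psd_block_id [pdQ PQ] _ _] := hF t tT.
exact: psd_trans PQ (invmx_antitone pdQ (feasR_Q_le_kalman hF tT)).
Qed.

Lemma optR_kalman P Q Qp Rm : optR P Q Qp Rm -> forall t, (t <= T)%N ->
  [/\ P t = kalman_P Rm t, Q t = kalman_Q Rm t & Qp t = kalman_Qpred Rm t].
Proof.
move=> [hF optP].
have PK := feasR_P_ge_kalman hF.
have [C [V /feasR_of_feasD /optP costPK]] := feasD_kalman_of_feasR hF.
have costE : cost T (kalman_P Rm) = cost T P.
  by apply/le_anti; rewrite (cost_le_psd PK) costPK.
have PE := cost_eq_psd PK costE.
have QE t : (t <= T)%N -> Q t = kalman_Q Rm t.
  move=> tT; have [_ /psd_block_id [pdQ PQ] _ _] := hF t tT.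
  have := invmx_antitone pdQ (feasR_Q_le_kalman hF tT).
  rewrite -/(kalman_P Rm t) -PE // => QP.
  by rewrite -[Q t]invmxK -(psd_anti PQ QP) PE // invmxK.
move=> t tT; split; rewrite ?PE ?QE //.
by have [QpRE _ _ _] := hF t tT; apply: (addIr (Rm t)); rewrite -QpRE -kalman_QE QE.
Qed.

Lemma eq_feasD P Q Qp P' Q' Qp' Rm C V :
  (forall t, (t <= T)%N -> [/\ P' t = P t, Q' t = Q t & Qp' t = Qp t]) ->
  feasD P Q Qp Rm C V -> feasD P' Q' Qp' Rm C V.
Proof.
move=> eqPQ hD t tT; have [PQ QE Qp_spec RE CV] := hD t tT.
have [-> -> ->] := eqPQ t tT; split=> //.
case: t tT {PQ QE RE CV} Qp_spec => [|t] tT /=; first by have [_ _ ->] := eqPQ 0%N tT.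
by have [-> _ _] := eqPQ t (ltnW tT).
Qed.

End KalmanRecursion.

Theorem theorem2 (R : realType) (n T : nat) (A : nat -> 'M[R]_n)
  (W Sigma0 : 'M[R]_n) (m : nat -> nat)
  (Cset : forall t, 'M[R]_(m t, n) -> Prop)
  (Vset : forall t, 'M[R]_(m t) -> Prop)
  (hW : pd W) (hS0 : pd Sigma0)
  (hV : forall t (Vt : 'M[R]_(m t)), Vset t Vt -> pd Vt) :
  (forall P Q Qp Rm : nat -> 'M[R]_n,
     optR T A W Sigma0 Cset Vset P Q Qp Rm ->
     exists (C : forall t, 'M[R]_(m t, n)) (V : forall t, 'M[R]_(m t)),
       optD T A W Sigma0 Cset Vset P Q Qp Rm C V) /\
  (forall (P Q Qp Rm : nat -> 'M[R]_n)
     (C : forall t, 'M[R]_(m t, n)) (V : forall t, 'M[R]_(m t)),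
     optD T A W Sigma0 Cset Vset P Q Qp Rm C V ->
     optR T A W Sigma0 Cset Vset P Q Qp Rm).
Proof.
split=> [P Q Qp Rm optPR | P Q Qp Rm C V [feasPD optPD]].
  have [C [V feasK]] := feasD_kalman_of_feasR hW hS0 hV optPR.1.
  exists C, V; split; first exact: eq_feasD (optR_kalman hW hS0 hV optPR) feasK.
  by move=> P' Q' Qp' Rm' C' V' /(feasR_of_feasD hW hS0 hV); apply: optPR.2.
split=> [|P' Q' Qp' Rm' feasPR']; first exact: (feasR_of_feasD hW hS0 hV feasPD).
have [C' [V' /optPD costP]] := feasD_kalman_of_feasR hW hS0 hV feasPR'.
exact: le_trans costP (cost_le_psd (feasR_P_ge_kalman hW hS0 hV feasPR')).
Qed.
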